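(* Let $X$ be a complex Banach space and let $a,b\in\mathcal{L}(X)$ be such that $a$, $b$ and $ab$ all have g-Drazin inverses. If $a^2b=0$ and $ab^2=0$, then $a+b$ has a g-Drazin inverse.
   Context: $\mathcal{L}(X)$ denotes the Banach algebra of bounded linear operators on the complex Banach space $X$. An element $a$ of a unital Banach algebra $\mathcal{A}$ is quasinilpotent if $\lim_{n\to\infty}\|a^n\|^{1/n}=0$. An element $a\in\mathcal{A}$ has a g-Drazin (generalized Drazin) inverse if there exists $x\in\mathcal{A}$ with $x=xax$, $ax=xa$, and $a-a^2x$ quasinilpotent; such $x$ is unique and is denoted $a^d$. *)

From Stdlib Require Import Reals.
Open Scope R_scope.
Set Implicit Arguments.

Definition Cx : Type := (R * R)%type.
Definition Cadd (z w : Cx) : Cx := (fst z + fst w, snd z + snd w).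
Definition Cmul (z w : Cx) : Cx :=
  (fst z * fst w - snd z * snd w, fst z * snd w + snd z * fst w).
Definition C1 : Cx := (1, 0).
Definition Cmod (z : Cx) : R := sqrt (fst z * fst z + snd z * snd z).

Record CBanach := {
  car :> Type;
  vadd : car -> car -> car;
  vzero : car;
  vopp : car -> car;
  vscal : Cx -> car -> car;
  vnorm : car -> R;
  vadd_assoc : forall x y z, vadd x (vadd y z) = vadd (vadd x y) z;
  vadd_comm : forall x y, vadd x y = vadd y x;
  vadd_0 : forall x, vadd x vzero = x;
  vadd_opp : forall x, vadd x (vopp x) = vzero;
  vscal_1 : forall x, vscal C1 x = x;
  vscal_assoc : forall c d x, vscal c (vscal d x) = vscal (Cmul c d) x;
  vscal_distr_v : forall c x y, vscal c (vadd x y) = vadd (vscal c x) (vscal c y);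
  vscal_distr_c : forall c d x, vscal (Cadd c d) x = vadd (vscal c x) (vscal d x);
  vnorm_nonneg : forall x, 0 <= vnorm x;
  vnorm_eq0 : forall x, vnorm x = 0 -> x = vzero;
  vnorm_scal : forall c x, vnorm (vscal c x) = Cmod c * vnorm x;
  vnorm_triangle : forall x y, vnorm (vadd x y) <= vnorm x + vnorm y;
  v_complete : forall u : nat -> car,
    (forall eps, eps > 0 -> exists N, forall m n, (N <= m)%nat -> (N <= n)%nat ->
        vnorm (vadd (u m) (vopp (u n))) < eps) ->
    exists l, forall eps, eps > 0 -> exists N, forall n, (N <= n)%nat ->
        vnorm (vadd (u n) (vopp l)) < eps
}.

Arguments vadd {c0} _ _. Arguments vzero {c0}. Arguments vopp {c0} _.
Arguments vscal {c0} _ _. Arguments vnorm {c0} _.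

Section Ops.
Variable X : CBanach.

Definition bounded_linear (T : X -> X) : Prop :=
  (forall x y, T (vadd x y) = vadd (T x) (T y)) /\
  (forall c x, T (vscal c x) = vscal c (T x)) /\
  (exists M, forall x, vnorm (T x) <= M * vnorm x).

Definition op_zero : X -> X := fun _ => vzero.
Definition op_add (S T : X -> X) : X -> X := fun x => vadd (S x) (T x).
Definition op_sub (S T : X -> X) : X -> X := fun x => vadd (S x) (vopp (T x)).
Definition op_mul (S T : X -> X) : X -> X := fun x => S (T x).
Definition op_pow (T : X -> X) (n : nat) : X -> X :=
  Nat.iter n (fun F => op_mul T F) (fun x => x).

Definition is_opnorm (T : X -> X) (r : R) : Prop :=
  is_lub (fun y => exists x, vnorm x <= 1 /\ y = vnorm (T x)) r.

End Ops.

Arguments bounded_linear {X} T.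

Arguments op_add {X} S T _.
Arguments op_sub {X} S T _.
Arguments op_mul {X} S T _.
Arguments op_pow {X} T n _.
Arguments is_opnorm {X} T r.

Definition nroot (x : R) (n : nat) : R :=
  if Req_EM_T x 0 then 0 else Rpower x (/ INR n).

Definition quasinilpotent (X : CBanach) (T : X -> X) : Prop :=
  exists u : nat -> R, (forall n, is_opnorm (op_pow T n) (u n)) /\
    Un_cv (fun n => nroot (u n) n) 0.

Definition has_gDrazin (X : CBanach) (a : X -> X) : Prop :=
  exists x : X -> X, bounded_linear x /\
    x = op_mul x (op_mul a x) /\
    op_mul a x = op_mul x a /\
    @quasinilpotent X (op_sub a (op_mul a (op_mul a x))).
Arguments has_gDrazin {X} a.
Arguments quasinilpotent {X} T.

From Stdlib Require Import Reals Lra Lia List Bool Arith FunctionalExtensionality ClassicalEpsilon.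
Open Scope R_scope.

(* The corollary is reduced to three general facts about g-Drazin inverses in L(X):
   (1) the sum theorem: if p and q have g-Drazin inverses and p q = 0, then so
       does p + q, with an explicit inverse given by two norm-convergent series;
   (2) Cline's formula: if a b has one, so does b a;
   (3) if s^2 has one, so does s (s commutes with the spectral idempotent of s^2).
   With c = a + b, the hypotheses a^2 b = 0 = a b^2 make a c = a^2 + ab and
   b c = ba + b^2 orthogonal sums, hence c a, c b (Cline) and then
   c^2 = ca + cb have g-Drazin inverses, and finally c does. *)

Arguments vadd_assoc {_} _ _ _. Arguments vadd_comm {_} _ _. Arguments vadd_0 {_} _.
Arguments vadd_opp {_} _. Arguments vscal_1 {_} _. Arguments vscal_assoc {_} _ _ _.
Arguments vscal_distr_v {_} _ _ _. Arguments vscal_distr_c {_} _ _ _.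
Arguments vnorm_nonneg {_} _. Arguments vnorm_eq0 {_} _ _. Arguments vnorm_scal {_} _ _.
Arguments vnorm_triangle {_} _ _. Arguments v_complete {_} _ _.

Section AdditiveGroup.
Context {X : CBanach}.

Lemma add0v (x : X) : vadd vzero x = x.
Proof. rewrite vadd_comm; apply vadd_0. Qed.

Lemma addvCA (x y z : X) : vadd x (vadd y z) = vadd y (vadd x z).
Proof. rewrite !vadd_assoc, (vadd_comm x y); reflexivity. Qed.

Lemma opp_unique (a b : X) : vadd a b = vzero -> b = vopp a.
Proof.
  intro H. rewrite <- (add0v b), <- (vadd_opp a), (vadd_comm a (vopp a)), <- vadd_assoc, H, vadd_0.
  reflexivity.
Qed.

Lemma oppvK (a : X) : vopp (vopp a) = a.
Proof. symmetry; apply opp_unique. rewrite vadd_comm; apply vadd_opp. Qed.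

Lemma oppvD (a b : X) : vopp (vadd a b) = vadd (vopp a) (vopp b).
Proof.
  symmetry; apply opp_unique.
  rewrite <- vadd_assoc, (addvCA b), vadd_opp, vadd_0, vadd_opp; reflexivity.
Qed.

Lemma oppv0 : vopp (@vzero X) = vzero.
Proof. symmetry; apply opp_unique; apply vadd_0. Qed.

Inductive gexp := GAtom (n : nat) | GZero | GAdd (a b : gexp) | GOpp (a : gexp).

Fixpoint geval (env : list X) (e : gexp) : X :=
  match e with
  | GAtom n => nth n env vzero
  | GZero => vzero
  | GAdd a b => vadd (geval env a) (geval env b)
  | GOpp a => vopp (geval env a)
  end.

(* Normal form: a list of signed atoms ([true] = +, [false] = -). *)
Definition signed_atom := (bool * nat)%type.

Definition sa_eval (env : list X) (s : signed_atom) : X :=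
  if fst s then nth (snd s) env vzero else vopp (nth (snd s) env vzero).

Fixpoint sa_sum env (l : list signed_atom) : X :=
  match l with nil => vzero | h :: t => vadd (sa_eval env h) (sa_sum env t) end.

Definition sa_neg (s : signed_atom) : signed_atom := (negb (fst s), snd s).

Fixpoint flatten (e : gexp) : list signed_atom :=
  match e with
  | GAtom n => (true, n) :: nil
  | GZero => nil
  | GAdd a b => flatten a ++ flatten b
  | GOpp a => map sa_neg (flatten a)
  end.

Lemma sa_sum_app env l1 l2 : sa_sum env (l1 ++ l2) = vadd (sa_sum env l1) (sa_sum env l2).
Proof. induction l1; simpl. rewrite add0v; auto. rewrite IHl1, vadd_assoc; auto. Qed.

Lemma sa_eval_neg env s : sa_eval env (sa_neg s) = vopp (sa_eval env s).
Proof. destruct s as [[] n]; unfold sa_eval; simpl; rewrite ?oppvK; auto. Qed.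

Lemma sa_sum_neg env l : sa_sum env (map sa_neg l) = vopp (sa_sum env l).
Proof. induction l; simpl. rewrite oppv0; auto. rewrite IHl, sa_eval_neg, oppvD; auto. Qed.

Lemma flatten_correct env e : sa_sum env (flatten e) = geval env e.
Proof.
  induction e; simpl; auto.
  - apply vadd_0.
  - rewrite sa_sum_app, IHe1, IHe2; auto.
  - rewrite sa_sum_neg, IHe; auto.
Qed.

Definition sa_eqb (a b : signed_atom) := Bool.eqb (fst a) (fst b) && Nat.eqb (snd a) (snd b).

Lemma sa_eqb_eq a b : sa_eqb a b = true -> a = b.
Proof.
  destruct a as [a1 a2], b as [b1 b2]; unfold sa_eqb; simpl.
  intro H; apply andb_prop in H; destruct H as [H1 H2].
  apply eqb_prop in H1; apply Nat.eqb_eq in H2; subst; auto.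
Qed.

Fixpoint sa_remove (s : signed_atom) (l : list signed_atom) : option (list signed_atom) :=
  match l with
  | nil => None
  | y :: r => if sa_eqb s y then Some r else
      match sa_remove s r with Some r' => Some (y :: r') | None => None end
  end.

Lemma sa_remove_correct env s l l' :
  sa_remove s l = Some l' -> sa_sum env l = vadd (sa_eval env s) (sa_sum env l').
Proof.
  revert l'; induction l as [|y r IH]; simpl; intros l' H; [discriminate|].
  destruct (sa_eqb s y) eqn:E.
  - apply sa_eqb_eq in E; subst; injection H; intro; subst; auto.
  - destruct (sa_remove s r) as [r'|]; [|discriminate].
    injection H; intro; subst. simpl. rewrite (IH r' eq_refl). apply addvCA.
Qed.

Fixpoint cancel (l : list signed_atom) : list signed_atom :=
  match l with
  | nil => nil
  | h :: t => let t' := cancel t in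
      match sa_remove (sa_neg h) t' with Some t'' => t'' | None => h :: t' end
  end.

Lemma cancel_correct env l : sa_sum env (cancel l) = sa_sum env l.
Proof.
  induction l as [|h t IH]; simpl; auto.
  destruct (sa_remove (sa_neg h) (cancel t)) eqn:E.
  - rewrite <- IH, (sa_remove_correct env _ _ _ E), sa_eval_neg, vadd_assoc, vadd_opp, add0v; auto.
  - simpl; rewrite IH; auto.
Qed.

Lemma abel_sound env e1 e2 :
  cancel (flatten e1 ++ map sa_neg (flatten e2)) = nil -> geval env e1 = geval env e2.
Proof.
  intro H. assert (H2 := cancel_correct env (flatten e1 ++ map sa_neg (flatten e2))).
  rewrite H, sa_sum_app, sa_sum_neg, !flatten_correct in H2; simpl in H2.
  symmetry in H2. apply opp_unique in H2. apply (f_equal vopp) in H2. rewrite !oppvK in H2. auto.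
Qed.
End AdditiveGroup.

Ltac inlist x l :=
  match l with
  | nil => constr:(false)
  | cons x _ => constr:(true)
  | cons _ ?r => inlist x r
  end.
Ltac add_atom x l :=
  match inlist x l with true => l | false => constr:(cons x l) end.
Ltac atoms t l :=
  match t with
  | @vadd _ ?a ?b => let l1 := atoms a l in atoms b l1
  | @vopp _ ?a => atoms a l
  | @vzero _ => l
  | _ => add_atom t l
  end.
Ltac atom_index x l :=
  match l with
  | cons x _ => constr:(O)
  | cons _ ?r => let n := atom_index x r in constr:(S n)
  end.
Ltac reify t l :=
  match t with
  | @vadd _ ?a ?b => let ea := reify a l in let eb := reify b l in constr:(GAdd ea eb)
  | @vopp _ ?a => let ea := reify a l in constr:(GOpp ea)
  | @vzero _ => constr:(GZero)
  | _ => let n := atom_index t l in constr:(GAtom n)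
  end.
(* Prove an equality of two group expressions in a Banach space. *)
Ltac abel :=
  match goal with
  | |- @eq (car ?X) ?a ?b =>
    let l0 := atoms a (@nil (car X)) in
    let l := atoms b l0 in
    let ea := reify a l in let eb := reify b l in
    change (geval l ea = geval l eb);
    apply abel_sound; vm_compute; reflexivity
  end.

Section NormedSpace.
Context {X : CBanach}.
Implicit Types (x y z v : X).

Lemma add_self_eq0 v : vadd v v = v -> v = vzero.
Proof.
  intro H. transitivity (vadd (vadd v v) (vopp v)). abel. rewrite H, vadd_opp; auto.
Qed.

Lemma scal0v v : vscal (0,0) v = vzero.
Proof.
  apply add_self_eq0. rewrite <- vscal_distr_c. f_equal. unfold Cadd; simpl; f_equal; ring.
Qed.

Lemma norm0 : vnorm (@vzero X) = 0.
Proof.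
  rewrite <- (scal0v vzero), vnorm_scal. unfold Cmod; simpl.
  rewrite Rmult_0_l, Rplus_0_l, sqrt_0; ring.
Qed.

Lemma Cmod_real r : Cmod (r, 0) = Rabs r.
Proof. unfold Cmod; simpl. rewrite Rmult_0_l, Rplus_0_r. apply sqrt_Rsqr_abs. Qed.

Lemma scalN1v v : vscal (Ropp 1, 0) v = vopp v.
Proof.
  apply opp_unique. rewrite <- (vscal_1 v) at 1. unfold C1.
  rewrite <- vscal_distr_c, <- (scal0v v). f_equal. unfold Cadd; simpl; f_equal; ring.
Qed.

Lemma norm_opp v : vnorm (vopp v) = vnorm v.
Proof. rewrite <- scalN1v, vnorm_scal, Cmod_real, Rabs_Ropp, Rabs_R1; ring. Qed.

Definition vsub x y := vadd x (vopp y).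

Lemma norm_sub_sym x y : vnorm (vsub x y) = vnorm (vsub y x).
Proof. unfold vsub. rewrite <- norm_opp. f_equal. rewrite oppvD, oppvK. abel. Qed.

Lemma norm_sub_tri x y z : vnorm (vsub x z) <= vnorm (vsub x y) + vnorm (vsub y z).
Proof.
  unfold vsub. replace (vadd x (vopp z)) with (vadd (vadd x (vopp y)) (vadd y (vopp z))) by abel.
  apply vnorm_triangle.
Qed.

Lemma sub_eq0 x y : vnorm (vsub x y) = 0 -> x = y.
Proof.
  intro H. apply vnorm_eq0 in H. unfold vsub in H.
  transitivity (vadd (vadd x (vopp y)) y). abel. rewrite H; apply add0v.
Qed.

Lemma real_small_eq0 (a : R) : 0 <= a -> (forall e, 0 < e -> a < e) -> a = 0.
Proof.
  intros H1 H2. destruct (Rle_lt_or_eq_dec 0 a H1) as [h|h]; auto.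
  specialize (H2 (a/2)); lra.
Qed.

Definition lim_to (s : nat -> X) (l : X) :=
  forall e, 0 < e -> exists N, forall n, (N <= n)%nat -> vnorm (vsub (s n) l) < e.

Lemma lim_unique s l1 l2 : lim_to s l1 -> lim_to s l2 -> l1 = l2.
Proof.
  intros H1 H2. apply sub_eq0, real_small_eq0. apply vnorm_nonneg.
  intros e He. destruct (H1 (e/2)) as [N1 h1]; [lra|]. destruct (H2 (e/2)) as [N2 h2]; [lra|].
  specialize (h1 (N1+N2)%nat ltac:(lia)). specialize (h2 (N1+N2)%nat ltac:(lia)).
  eapply Rle_lt_trans. apply (norm_sub_tri _ (s (N1+N2)%nat)).
  rewrite norm_sub_sym. lra.
Qed.

Lemma lim_ext s1 s2 l : (forall n, s1 n = s2 n) -> lim_to s1 l -> lim_to s2 l.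
Proof. intros E H e He. destruct (H e He) as [N h]. exists N; intros; rewrite <- E; auto. Qed.

Lemma lim_shift s l : lim_to s l -> lim_to (fun n => s (S n)) l.
Proof. intros H e He. destruct (H e He) as [N h]. exists N; intros; apply h; lia. Qed.

Lemma lim_add s1 s2 l1 l2 :
  lim_to s1 l1 -> lim_to s2 l2 -> lim_to (fun n => vadd (s1 n) (s2 n)) (vadd l1 l2).
Proof.
  intros H1 H2 e He. destruct (H1 (e/2)) as [N1 h1]; [lra|]. destruct (H2 (e/2)) as [N2 h2]; [lra|].
  exists (N1+N2)%nat; intros n Hn. specialize (h1 n ltac:(lia)). specialize (h2 n ltac:(lia)).
  unfold vsub in *. replace (vadd (vadd (s1 n) (s2 n)) (vopp (vadd l1 l2))) with
    (vadd (vadd (s1 n) (vopp l1)) (vadd (s2 n) (vopp l2))) by (rewrite oppvD; abel).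
  eapply Rle_lt_trans. apply vnorm_triangle. lra.
Qed.

Lemma lim_const l : lim_to (fun _ : nat => l) l.
Proof. intros e He. exists O. intros. unfold vsub. rewrite vadd_opp, norm0. lra. Qed.

Lemma lim_norm_le s l M : lim_to s l -> (forall n, vnorm (s n) <= M) -> vnorm l <= M.
Proof.
  intros H HM. apply Rnot_lt_le; intro Hc.
  destruct (H (vnorm l - M)) as [N h]; [lra|]. specialize (h N (le_n _)).
  assert (Htri : vnorm l <= vnorm (s N) + vnorm (vsub l (s N))).
  { unfold vsub. replace l with (vadd (s N) (vadd l (vopp (s N)))) at 1 by abel.
    apply vnorm_triangle. }
  rewrite norm_sub_sym in h. specialize (HM N). lra.
Qed.

Lemma cauchy_lim (s : nat -> X) :
  (forall e, 0 < e -> exists N, forall m n, (N <= m)%nat -> (N <= n)%nat ->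
     vnorm (vsub (s m) (s n)) < e) ->
  exists l, lim_to s l.
Proof.
  intro H. destruct (v_complete s) as [l Hl].
  - intros e He; destruct (H e He) as [N h]; exists N; intros; apply h; auto.
  - exists l. intros e He. destruct (Hl e He) as [N h]; exists N; auto.
Qed.
End NormedSpace.

Section Operators.
Context {X : CBanach}.
Implicit Types (u v : X) (S T : X -> X).

Definition additive T := forall u v, T (vadd u v) = vadd (T u) (T v).
Definition homogeneous T := forall c v, T (vscal c v) = vscal c (T v).
Definition linear_map T := additive T /\ homogeneous T.
Definition bounded_by T M := forall v, vnorm (T v) <= M * vnorm v.

Lemma additive_0 T : additive T -> T vzero = vzero.
Proof. intro H. apply add_self_eq0. rewrite <- H, vadd_0; auto. Qed.

Lemma additive_opp T v : additive T -> T (vopp v) = vopp (T v).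
Proof. intro H. apply opp_unique. rewrite <- H, vadd_opp. apply additive_0; auto. Qed.

Lemma additive_sub T u v : additive T -> T (vsub u v) = vsub (T u) (T v).
Proof. intro H; unfold vsub; rewrite H, additive_opp; auto. Qed.

Lemma bl_linear T : bounded_linear T -> linear_map T.
Proof. intros [h1 [h2 _]]; split; auto. Qed.

Lemma bl_additive T : bounded_linear T -> additive T.
Proof. intro H; apply (bl_linear T H). Qed.

Lemma bl_bounded T : bounded_linear T -> exists M, 0 <= M /\ bounded_by T M.
Proof.
  intros [_ [_ [M HM]]]. exists (Rabs M). split. apply Rabs_pos.
  intro v. eapply Rle_trans. apply HM. apply Rmult_le_compat_r. apply vnorm_nonneg. apply RRle_abs.
Qed.

Lemma bl_intro T M : linear_map T -> bounded_by T M -> bounded_linear T.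
Proof. intros [h1 h2] h3. split; [|split]; auto. exists M; auto. Qed.

Lemma bl_id : bounded_linear (fun v : X => v).
Proof. apply (bl_intro _ 1). split; intros ? ?; auto. intro; lra. Qed.

Lemma bl_comp S T : bounded_linear S -> bounded_linear T -> bounded_linear (fun v => S (T v)).
Proof.
  intros HS HT. destruct (bl_bounded S HS) as [K1 [H1 B1]], (bl_bounded T HT) as [K2 [H2 B2]].
  destruct (bl_linear S HS) as [a1 s1], (bl_linear T HT) as [a2 s2].
  apply (bl_intro _ (K1 * K2)). split; intros ? ?; [rewrite a2, a1|rewrite s2, s1]; auto.
  intro v. eapply Rle_trans. apply B1. rewrite Rmult_assoc. apply Rmult_le_compat_l; auto.
Qed.

Lemma bl_add S T : bounded_linear S -> bounded_linear T -> bounded_linear (fun v => vadd (S v) (T v)).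
Proof.
  intros HS HT. destruct (bl_bounded S HS) as [K1 [H1 B1]], (bl_bounded T HT) as [K2 [H2 B2]].
  destruct (bl_linear S HS) as [a1 s1], (bl_linear T HT) as [a2 s2].
  apply (bl_intro _ (K1 + K2)). split; intros ? ?.
  - rewrite a2, a1; abel.
  - rewrite s2, s1, vscal_distr_v; auto.
  - intro v. eapply Rle_trans. apply vnorm_triangle. specialize (B1 v); specialize (B2 v). lra.
Qed.

Lemma bl_opp T : bounded_linear T -> bounded_linear (fun v => vopp (T v)).
Proof.
  intros HT. destruct (bl_bounded T HT) as [K [HK BK]], (bl_linear T HT) as [aT sT].
  apply (bl_intro _ K). split; intros ? ?.
  - rewrite aT, oppvD; auto.
  - rewrite sT, <- !scalN1v, !vscal_assoc. f_equal. unfold Cmul; simpl. f_equal; ring.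
  - intro v. rewrite norm_opp. auto.
Qed.

Lemma bl_sub S T : bounded_linear S -> bounded_linear T -> bounded_linear (fun v => vsub (S v) (T v)).
Proof. intros; unfold vsub; apply bl_add; auto; apply bl_opp; auto. Qed.

Lemma lim_map T M s l :
  additive T -> bounded_by T M -> 0 <= M -> lim_to s l -> lim_to (fun n => T (s n)) (T l).
Proof.
  intros HA HB HM H e He. destruct (H (e/(M+1))) as [N h].
  { apply Rdiv_lt_0_compat; lra. }
  exists N; intros n Hn. rewrite <- additive_sub; auto. eapply Rle_lt_trans. apply HB.
  specialize (h n Hn). apply Rle_lt_trans with ((M+1) * vnorm (vsub (s n) l)).
  - apply Rmult_le_compat_r. apply vnorm_nonneg. lra.
  - apply Rmult_lt_reg_l with (/(M+1)). apply Rinv_0_lt_compat; lra.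
    rewrite <- Rmult_assoc, Rinv_l, Rmult_1_l by lra. unfold Rdiv in h; lra.
Qed.

Lemma lim_scal c (s : nat -> X) (l : X) : lim_to s l -> lim_to (fun n => vscal c (s n)) (vscal c l).
Proof.
  apply (lim_map (fun v : X => vscal c v) (Cmod c)).
  - intros u v; apply vscal_distr_v.
  - intro v; rewrite vnorm_scal; lra.
  - unfold Cmod; apply sqrt_pos.
Qed.

Lemma op_pow_S T n v : op_pow T (S n) v = T (op_pow T n v).
Proof. reflexivity. Qed.

Lemma op_pow_Sr T n v : op_pow T (S n) v = op_pow T n (T v).
Proof. induction n; simpl; auto. unfold op_mul. f_equal. apply IHn. Qed.

Lemma op_pow_additive T n : additive T -> additive (op_pow T n).
Proof. intros H u v; induction n; simpl; auto. unfold op_mul; rewrite IHn; auto. Qed.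

Lemma op_pow_homogeneous T n : homogeneous T -> homogeneous (op_pow T n).
Proof. intros H c v; induction n; simpl; auto. unfold op_mul; rewrite IHn; auto. Qed.

Lemma op_pow_bounded T M n : bounded_by T M -> 0 <= M -> bounded_by (op_pow T n) (M ^ n).
Proof.
  intros H HM v; induction n; simpl. lra.
  unfold op_mul. eapply Rle_trans. apply H. rewrite Rmult_assoc. apply Rmult_le_compat_l; auto.
Qed.

Lemma op_pow_comm T S n v : (forall u, T (S u) = S (T u)) -> op_pow T n (S v) = S (op_pow T n v).
Proof. intro H; induction n; simpl; auto. unfold op_mul; rewrite IHn; auto. Qed.

Lemma op_pow_mul_comm T S n v : (forall u, T (S u) = S (T u)) ->
  op_pow (fun u => T (S u)) n v = op_pow T n (op_pow S n v).
Proof.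
  intro H; induction n; simpl; auto. unfold op_mul. rewrite IHn.
  f_equal. rewrite (op_pow_comm T S n); auto.
Qed.

End Operators.

Ltac bl_auto :=
  repeat first [ assumption | apply bl_id | apply bl_sub | apply bl_add | apply bl_opp | apply bl_comp ].

Ltac push_additive := repeat match goal with
 | H : additive ?T |- context [?T (vadd ?a ?b)] => rewrite (H a b)
 | H : additive ?T |- context [?T (vopp ?w)] => rewrite (additive_opp T w H)
 | H : additive ?T |- context [?T vzero] => rewrite (additive_0 T H)
 end.

Lemma Rpower_inv_pow (u : R) (n : nat) : 0 < u -> (1 <= n)%nat -> (Rpower u (/ INR n)) ^ n = u.
Proof.
  intros Hu Hn. rewrite <- Rpower_pow by (unfold Rpower; apply exp_pos).
  rewrite Rpower_mult, Rinv_l, Rpower_1; auto. apply not_0_INR; lia.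
Qed.

Lemma nroot_nonneg (u : R) (n : nat) : 0 <= nroot u n.
Proof. unfold nroot; destruct (Req_EM_T u 0). lra. unfold Rpower; left; apply exp_pos. Qed.

Lemma nroot_lt (u eps : R) (n : nat) :
  0 <= u -> 0 < eps -> (1 <= n)%nat -> u < eps ^ n -> nroot u n < eps.
Proof.
  intros Hu He Hn H. unfold nroot. destruct (Req_EM_T u 0); auto.
  apply Rnot_le_lt; intro Hc. assert (eps ^ n <= Rpower u (/ INR n) ^ n) by (apply pow_incr; lra).
  rewrite Rpower_inv_pow in *; auto; lra.
Qed.

Lemma nroot_le (u eps : R) (n : nat) :
  0 <= u -> 0 < eps -> (1 <= n)%nat -> nroot u n < eps -> u <= eps ^ n.
Proof.
  intros Hu He Hn H. unfold nroot in H. destruct (Req_EM_T u 0).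
  - subst; apply pow_le; lra.
  - rewrite <- (Rpower_inv_pow u n) by (auto; lra). apply pow_incr. split; [|lra].
    unfold Rpower; left; apply exp_pos.
Qed.

Lemma geometric_eventually_lt (rho c : R) : 0 <= rho < 1 -> 0 < c ->
  exists N, forall n, (N <= n)%nat -> rho ^ n < c.
Proof.
  intros Hr Hc. destruct (pow_lt_1_zero rho ltac:(rewrite Rabs_right; lra) c Hc) as [N HN].
  exists N. intros n Hn. specialize (HN n Hn). rewrite Rabs_right in HN; auto.
  apply Rle_ge, pow_le; lra.
Qed.

(* The first [N] terms of a geometric bound can be absorbed into the constant. *)
Lemma pow_head_bound (M e : R) (n N : nat) : 1 <= M -> 0 < e <= 1 -> (n < N)%nat ->
  M ^ n <= M ^ N / e ^ N * e ^ n.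
Proof.
  intros HM He Hn.
  assert (HeN : 0 < e ^ N) by (apply pow_lt; lra).
  assert (HeNn : e ^ N <= e ^ n).
  { replace N with (n + (N - n))%nat by lia. rewrite pow_add.
    rewrite <- (Rmult_1_r (e ^ n)) at 2. apply Rmult_le_compat_l. apply pow_le; lra.
    rewrite <- (pow1 (N - n)). apply pow_incr; lra. }
  apply Rle_trans with (M ^ N). apply Rle_pow; auto; lia.
  unfold Rdiv. rewrite Rmult_assoc. rewrite <- (Rmult_1_r (M ^ N)) at 1.
  apply Rmult_le_compat_l. apply pow_le; lra.
  apply Rmult_le_reg_l with (e ^ N); auto. rewrite <- Rmult_assoc, Rinv_r, Rmult_1_l, Rmult_1_r; lra.
Qed.

(* Quasinilpotence in the form used throughout: geometric bounds of every ratio. *)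
Section Quasinilpotence.
Context {X : CBanach}.
Implicit Types (v : X) (T : X -> X).

Definition qn_bound T := forall eps, 0 < eps -> exists C, forall n v,
  vnorm (op_pow T n v) <= C * eps ^ n * vnorm v.

Lemma qn_bound_ext S T : (forall v, S v = T v) -> qn_bound S -> qn_bound T.
Proof. intros H; replace T with S; auto. apply functional_extensionality; auto. Qed.

Lemma qn_bound_eventually T M : bounded_by T M -> 0 <= M ->
  (forall eps, 0 < eps < 1 -> exists C N, forall n v, (N <= n)%nat ->
      vnorm (op_pow T n v) <= C * eps ^ n * vnorm v) -> qn_bound T.
Proof.
  intros HB HM H eps Heps.
  set (e := Rmin eps (1/2)).
  assert (He : 0 < e < 1) by (unfold e, Rmin; destruct (Rle_dec eps (1/2)); lra).
  assert (Hee : e <= eps) by apply Rmin_l.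
  destruct (H e He) as [C [N HC]].
  set (M1 := Rmax M 1).
  assert (HM1 : 1 <= M1) by apply Rmax_r.
  set (K := Rabs C + M1 ^ N / e ^ N).
  assert (HK : Rabs C <= K /\ M1 ^ N / e ^ N <= K).
  { assert (0 <= Rabs C) by apply Rabs_pos.
    assert (0 <= M1 ^ N / e ^ N) by (apply Rle_mult_inv_pos; [apply pow_le|apply pow_lt]; lra).
    unfold K; lra. }
  exists K. intros n v.
  assert (Hv := vnorm_nonneg v).
  assert (Hen : 0 < e ^ n <= eps ^ n) by (split; [apply pow_lt|apply pow_incr]; lra).
  apply Rle_trans with (K * e ^ n * vnorm v).
  2: { apply Rmult_le_compat_r; auto. apply Rmult_le_compat_l; [|lra]. pose proof (Rabs_pos C); lra. }
  destruct (le_lt_dec N n) as [h|h].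
  - eapply Rle_trans. apply HC; auto. apply Rmult_le_compat_r; auto.
    apply Rmult_le_compat_r; [lra|]. pose proof (RRle_abs C); lra.
  - eapply Rle_trans. apply (op_pow_bounded T M n HB HM v).
    apply Rmult_le_compat_r; auto.
    apply Rle_trans with (M1 ^ n). apply pow_incr; split; [auto|apply Rmax_l].
    eapply Rle_trans. apply (pow_head_bound M1 e n N HM1 ltac:(lra) h).
    apply Rmult_le_compat_r; lra.
Qed.

Lemma opnorm_bounded T r : linear_map T -> is_opnorm T r -> bounded_by T r.
Proof.
  intros [HA HS] [Hub _] v.
  destruct (Req_EM_T (vnorm v) 0) as [h|h].
  - apply vnorm_eq0 in h. subst. rewrite (additive_0 T HA), !norm0. lra.
  - assert (Hp : 0 < vnorm v) by (assert (Hn := vnorm_nonneg v); lra).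
    set (w := vscal (/ vnorm v, 0) v).
    assert (Hw : vnorm w = 1).
    { unfold w. rewrite vnorm_scal, Cmod_real, Rabs_right. field; lra.
      left; apply Rinv_0_lt_compat; auto. }
    assert (H1 : vnorm (T w) <= r). { apply Hub. exists w; split; auto; lra. }
    unfold w in H1. rewrite HS, vnorm_scal, Cmod_real, Rabs_right in H1.
    2: left; apply Rinv_0_lt_compat; auto.
    apply Rmult_le_reg_l with (/ vnorm v). apply Rinv_0_lt_compat; auto.
    rewrite <- Rmult_assoc, (Rmult_comm _ r), Rmult_assoc, Rinv_l, Rmult_1_r; lra.
Qed.

Lemma opnorm_nonneg T r : additive T -> is_opnorm T r -> 0 <= r.
Proof.
  intros HA [Hub _]. rewrite <- (@norm0 X), <- (additive_0 T HA).
  apply Hub. exists vzero. rewrite norm0; split; auto; lra.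
Qed.

Lemma opnorm_le T r K : 0 <= K -> is_opnorm T r -> bounded_by T K -> r <= K.
Proof.
  intros HK [_ Hlub] HB. apply Hlub. intros z [x [h1 h2]]. subst.
  eapply Rle_trans. apply HB. rewrite <- (Rmult_1_r K) at 2. apply Rmult_le_compat_l; auto.
Qed.

Lemma opnorm_exists T K : additive T -> bounded_by T K -> 0 <= K -> exists r, is_opnorm T r.
Proof.
  intros HA HB HK.
  destruct (completeness (fun z : R => exists x, vnorm x <= 1 /\ z = vnorm (T x))) as [r Hr].
  - exists K. intros z [x [h1 h2]]. subst. eapply Rle_trans. apply HB.
    rewrite <- (Rmult_1_r K) at 2. apply Rmult_le_compat_l; auto.
  - exists (vnorm (T vzero)). exists vzero; rewrite norm0; split; auto; lra.
  - exists r; exact Hr.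
Qed.

Lemma qn_bound_of_quasinilpotent T : bounded_linear T -> quasinilpotent T -> qn_bound T.
Proof.
  intros HT [u [Hu Hc]].
  destruct (bl_bounded T HT) as [M [HM0 HM]].
  apply (qn_bound_eventually T M HM HM0). intros eps He.
  destruct (Hc eps ltac:(lra)) as [N HN].
  exists 1, (N + 1)%nat. intros n v Hn.
  assert (Hl := conj (op_pow_additive T n (bl_additive T HT))
                     (op_pow_homogeneous T n (proj2 (bl_linear T HT)))).
  eapply Rle_trans. apply (opnorm_bounded _ _ Hl (Hu n)).
  apply Rmult_le_compat_r. apply vnorm_nonneg. rewrite Rmult_1_l.
  apply nroot_le; try lra; try lia. apply (opnorm_nonneg _ _ (proj1 Hl) (Hu n)).
  specialize (HN n ltac:(lia)). unfold Rdist in HN. rewrite Rminus_0_r in HN.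
  eapply Rle_lt_trans. apply RRle_abs. auto.
Qed.

Lemma quasinilpotent_of_qn_bound T : bounded_linear T -> qn_bound T -> quasinilpotent T.
Proof.
  intros HT HQ.
  assert (HA : forall n, additive (op_pow T n)) by (intro; apply op_pow_additive, bl_additive, HT).
  assert (Hex : forall n, exists r, is_opnorm (op_pow T n) r).
  { intro n. destruct (HQ 1 ltac:(lra)) as [C HC].
    apply (opnorm_exists _ (Rabs C * 1 ^ n)); auto.
    - intro v. eapply Rle_trans. apply HC. apply Rmult_le_compat_r. apply vnorm_nonneg.
      apply Rmult_le_compat_r. rewrite pow1; lra. apply RRle_abs.
    - rewrite pow1, Rmult_1_r. apply Rabs_pos. }
  exists (fun n => proj1_sig (constructive_indefinite_description _ (Hex n))).
  split. { intro n; destruct (constructive_indefinite_description _ _); auto. }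
  intros eps He.
  destruct (HQ (eps / 2) ltac:(lra)) as [C HC].
  assert (HC0 : 0 <= Rabs C) by apply Rabs_pos.
  destruct (geometric_eventually_lt (1/2) (/ (Rabs C + 1)) ltac:(lra)) as [N HN].
  { apply Rinv_0_lt_compat; lra. }
  exists (N + 1)%nat. intros n Hn.
  destruct (constructive_indefinite_description _ _) as [r Hr]. simpl.
  assert (Hhalf : 0 < (1/2) ^ n) by (apply pow_lt; lra).
  assert (Hepsn : 0 < eps ^ n) by (apply pow_lt; lra).
  assert (Hrb : r <= Rabs C * (1/2) ^ n * eps ^ n).
  { assert (0 <= Rabs C * (1/2) ^ n * eps ^ n) by (apply Rmult_le_pos; nra).
    apply (opnorm_le _ _ _ H Hr). intro v. eapply Rle_trans. apply HC.
    replace (eps / 2) with (1/2 * eps) by field. rewrite Rpow_mult_distr.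
    apply Rmult_le_compat_r. apply vnorm_nonneg.
    pose proof (RRle_abs C). assert (0 <= (1/2) ^ n * eps ^ n) by nra. nra. }
  assert (Hsmall : Rabs C * (1/2) ^ n < 1).
  { specialize (HN n ltac:(lia)).
    apply Rmult_lt_reg_l with (/ (Rabs C + 1)). apply Rinv_0_lt_compat; lra.
    rewrite Rmult_1_r. eapply Rle_lt_trans; [|exact HN].
    rewrite <- Rmult_assoc. rewrite <- (Rmult_1_l ((1/2)^n)) at 2. apply Rmult_le_compat_r. lra.
    apply Rmult_le_reg_l with (Rabs C + 1). lra.
    rewrite <- Rmult_assoc, Rinv_r, Rmult_1_l, Rmult_1_r; lra. }
  unfold Rdist. rewrite Rminus_0_r, Rabs_right by (apply Rle_ge, nroot_nonneg).
  apply nroot_lt; try lia; try lra. apply (opnorm_nonneg _ _ (HA n) Hr). nra.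
Qed.
End Quasinilpotence.

(* Solving [S = Cc + B S G] by the series [S = sum_n B^n Cc G^n], which converges
   in norm as soon as its terms decay geometrically. *)
Section SeriesSolution.
Context {X : CBanach}.
Implicit Types (v : X).
Variables (B G Cc : X -> X) (D rho : R).
Hypotheses (HB : bounded_linear B) (HG : bounded_linear G) (HC : bounded_linear Cc)
  (HD : 0 <= D) (Hrho : 0 <= rho < 1)
  (Hdecay : forall n v, vnorm (op_pow B n (Cc (op_pow G n v))) <= D * rho ^ n * vnorm v).

Let term n v := op_pow B n (Cc (op_pow G n v)).

Fixpoint partial_sum (N : nat) (v : X) : X :=
  match N with O => vzero | S N => vadd (partial_sum N v) (term N v) end.

Lemma term_linear n : linear_map (term n).
Proof.
  destruct (bl_linear B HB) as [bA bS], (bl_linear G HG) as [gA gS], (bl_linear Cc HC) as [cA cS].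
  split; intros ? ?; unfold term.
  - rewrite (op_pow_additive G n gA), cA, (op_pow_additive B n bA); auto.
  - rewrite (op_pow_homogeneous G n gS), cS, (op_pow_homogeneous B n bS); auto.
Qed.

Lemma partial_sum_linear N : linear_map (partial_sum N).
Proof.
  split.
  - intros u v; induction N as [|N IH]; simpl; [abel|].
    rewrite IH, (proj1 (term_linear N)). abel.
  - intros c v; induction N as [|N IH]; simpl.
    + rewrite <- (scal0v vzero), vscal_assoc. unfold Cmul; simpl. f_equal. f_equal; ring.
    + rewrite IH, (proj2 (term_linear N)), vscal_distr_v; auto.
Qed.

Lemma partial_sum_diff n m v : (n <= m)%nat ->
  vnorm (vsub (partial_sum m v) (partial_sum n v)) <= D * vnorm v * (rho ^ n - rho ^ m) / (1 - rho).
Proof.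
  intro H. induction H.
  - unfold vsub. rewrite vadd_opp, norm0. unfold Rminus. rewrite Rplus_opp_r, Rmult_0_r.
    unfold Rdiv; rewrite Rmult_0_l; lra.
  - simpl. unfold vsub in *.
    replace (vadd (vadd (partial_sum m v) (term m v)) (vopp (partial_sum n v))) with
      (vadd (vadd (partial_sum m v) (vopp (partial_sum n v))) (term m v)) by abel.
    eapply Rle_trans. apply vnorm_triangle.
    assert (h := Hdecay m v). fold (term m v) in h.
    apply Rle_trans with (D * vnorm v * (rho ^ n - rho ^ m) / (1 - rho) + D * rho ^ m * vnorm v).
    lra. right. field. lra.
Qed.

Lemma partial_sum_cauchy v : exists l, lim_to (fun N => partial_sum N v) l.
Proof.
  apply cauchy_lim. intros e He.
  assert (Hv := vnorm_nonneg v).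
  set (K := D * vnorm v / (1 - rho) + 1).
  assert (HK : 0 < K).
  { assert (0 <= D * vnorm v / (1 - rho)) by (apply Rle_mult_inv_pos; [apply Rmult_le_pos|]; lra).
    unfold K; lra. }
  destruct (geometric_eventually_lt rho (e / K) Hrho) as [N HN]. { apply Rdiv_lt_0_compat; auto. }
  exists N.
  assert (Hmono : forall a b, (N <= a)%nat -> (a <= b)%nat ->
            vnorm (vsub (partial_sum b v) (partial_sum a v)) < e).
  { intros a b Ha Hab. eapply Rle_lt_trans. apply partial_sum_diff; auto.
    specialize (HN a Ha).
    assert (0 <= rho ^ b) by (apply pow_le; lra).
    apply Rle_lt_trans with (K * rho ^ a).
    - unfold Rdiv. replace (D * vnorm v * (rho ^ a - rho ^ b) * / (1 - rho)) with
        (D * vnorm v * / (1 - rho) * (rho ^ a - rho ^ b)) by ring.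
      apply Rle_trans with (D * vnorm v * / (1 - rho) * rho ^ a).
      + apply Rmult_le_compat_l; [|lra]. apply Rmult_le_pos. apply Rmult_le_pos; auto.
        left; apply Rinv_0_lt_compat; lra.
      + apply Rmult_le_compat_r. apply pow_le; lra. unfold K, Rdiv; lra.
    - apply Rmult_lt_reg_l with (/ K). apply Rinv_0_lt_compat; auto.
      rewrite <- Rmult_assoc, Rinv_l, Rmult_1_l by lra. unfold Rdiv in HN. lra. }
  intros m n Hm Hn. destruct (le_lt_dec n m).
  - apply Hmono; auto.
  - rewrite norm_sub_sym. apply Hmono; auto. lia.
Qed.

Definition series_sum (v : X) : X :=
  proj1_sig (constructive_indefinite_description _ (partial_sum_cauchy v)).

Lemma series_sum_lim v : lim_to (fun N => partial_sum N v) (series_sum v).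
Proof. unfold series_sum. destruct (constructive_indefinite_description _ _); auto. Qed.

Lemma series_sum_bounded_linear : bounded_linear series_sum.
Proof.
  apply (bl_intro series_sum (D / (1 - rho))). split.
  - intros u v. apply (lim_unique (fun N => partial_sum N (vadd u v))). apply series_sum_lim.
    apply (lim_ext (fun N => vadd (partial_sum N u) (partial_sum N v))).
    { intro; symmetry; apply partial_sum_linear. }
    apply lim_add; apply series_sum_lim.
  - intros c v. apply (lim_unique (fun N => partial_sum N (vscal c v))). apply series_sum_lim.
    apply (lim_ext (fun N => vscal c (partial_sum N v))).
    { intro; symmetry; apply partial_sum_linear. }
    apply lim_scal; apply series_sum_lim.
  - intro v. apply (lim_norm_le (fun N => partial_sum N v)). apply series_sum_lim.
    intro N. assert (h := partial_sum_diff 0 N v ltac:(lia)). unfold vsub in h. simpl in h.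
    rewrite oppv0, vadd_0 in h. eapply Rle_trans. apply h.
    assert (0 <= rho ^ N) by (apply pow_le; lra). assert (Hv := vnorm_nonneg v).
    unfold Rdiv. replace (D * vnorm v * (1 - rho ^ N) * / (1 - rho)) with
      ((D * / (1 - rho)) * vnorm v * (1 - rho ^ N)) by ring.
    rewrite <- (Rmult_1_r (D * / (1 - rho) * vnorm v)) at 2. apply Rmult_le_compat_l; [|lra].
    apply Rmult_le_pos; auto. apply Rmult_le_pos; auto. left; apply Rinv_0_lt_compat; lra.
Qed.

Lemma partial_sum_S N v : partial_sum (S N) v = vadd (Cc v) (B (partial_sum N (G v))).
Proof.
  induction N.
  - simpl. unfold term. simpl. rewrite (additive_0 B (bl_additive B HB)). abel.
  - change (partial_sum (S (S N)) v) with (vadd (partial_sum (S N) v) (term (S N) v)). rewrite IHN.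
    simpl partial_sum. rewrite (bl_additive B HB). unfold term. rewrite op_pow_S, op_pow_Sr. abel.
Qed.

Lemma series_solution : exists S, bounded_linear S /\ forall v, S v = vadd (Cc v) (B (S (G v))).
Proof.
  exists series_sum. split. apply series_sum_bounded_linear. intro v.
  destruct (bl_bounded B HB) as [MB [HMB0 HMB]].
  apply (lim_unique (fun N => partial_sum (S N) v)).
  - apply (lim_shift (fun N => partial_sum N v)), series_sum_lim.
  - apply (lim_ext (fun N => vadd (Cc v) (B (partial_sum N (G v))))).
    { intro; symmetry; apply partial_sum_S. }
    apply lim_add. apply lim_const. apply (lim_map B MB); auto. apply (bl_additive B HB).
    apply series_sum_lim.
Qed.
End SeriesSolution.

Section QuasinilpotentCalculus.
Context {X : CBanach}.
Implicit Types (v w : X) (A B G T W Z : X -> X).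

Lemma qn_bound_ge1 T : qn_bound T -> forall eps, 0 < eps -> exists C, 1 <= C /\
  forall n v, vnorm (op_pow T n v) <= C * eps ^ n * vnorm v.
Proof.
  intros HT eps He. destruct (HT eps He) as [C HC]. exists (Rabs C + 1).
  split. pose proof (Rabs_pos C); lra.
  intros n v. eapply Rle_trans. apply HC. apply Rmult_le_compat_r. apply vnorm_nonneg.
  apply Rmult_le_compat_r. apply pow_le; lra. pose proof (RRle_abs C); lra.
Qed.

Lemma sandwich_bound B G Cc C1 C2 Kc r1 r2 rho :
  0 <= C1 -> 0 <= C2 -> 0 <= Kc -> 0 <= r1 -> 0 <= r2 -> r1 * r2 <= rho ->
  (forall n w, vnorm (op_pow B n w) <= C1 * r1 ^ n * vnorm w) -> bounded_by Cc Kc ->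
  (forall n w, vnorm (op_pow G n w) <= C2 * r2 ^ n * vnorm w) ->
  forall n v, vnorm (op_pow B n (Cc (op_pow G n v))) <= C1 * Kc * C2 * rho ^ n * vnorm v.
Proof.
  intros HC1 HC2 HKc Hr1 Hr2 Hrho HBn HCc HGn n v.
  assert (Hv := vnorm_nonneg v).
  assert (Hp : 0 <= r1 ^ n /\ 0 <= r2 ^ n) by (split; apply pow_le; auto).
  assert (Hq : (r1 * r2) ^ n <= rho ^ n) by (apply pow_incr; split; auto; apply Rmult_le_pos; auto).
  eapply Rle_trans. apply HBn.
  apply Rle_trans with (C1 * r1 ^ n * (Kc * (C2 * r2 ^ n * vnorm v))).
  { apply Rmult_le_compat_l. apply Rmult_le_pos; tauto.
    eapply Rle_trans. apply HCc. apply Rmult_le_compat_l; auto. }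
  replace (C1 * r1 ^ n * (Kc * (C2 * r2 ^ n * vnorm v))) with
    (C1 * Kc * C2 * (r1 * r2) ^ n * vnorm v) by (rewrite Rpow_mult_distr; ring).
  apply Rmult_le_compat_r; auto. apply Rmult_le_compat_l; auto.
  repeat apply Rmult_le_pos; auto.
Qed.

Lemma decay_qn_left B G Cc : bounded_linear G -> bounded_linear Cc -> qn_bound B ->
  exists D, 0 <= D /\ forall n v, vnorm (op_pow B n (Cc (op_pow G n v))) <= D * (1/2) ^ n * vnorm v.
Proof.
  intros HG HC HQ.
  destruct (bl_bounded G HG) as [K [HK0 HK]], (bl_bounded Cc HC) as [Kc [HKc0 HKc]].
  destruct (qn_bound_ge1 B HQ (/ (2 * (K + 1)))) as [C [HC1 HCb]].
  { apply Rinv_0_lt_compat; lra. }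
  exists (C * Kc * 1). split. { apply Rmult_le_pos; [apply Rmult_le_pos|]; lra. }
  apply (sandwich_bound B G Cc C 1 Kc (/ (2 * (K + 1))) K); auto; try lra.
  - left; apply Rinv_0_lt_compat; lra.
  - apply Rmult_le_reg_l with (2 * (K + 1)). lra.
    rewrite <- Rmult_assoc, Rinv_r; lra.
  - intros n w. rewrite Rmult_1_l. apply op_pow_bounded; auto.
Qed.

Lemma decay_qn_right B G Cc : bounded_linear B -> bounded_linear Cc -> qn_bound G ->
  exists D, 0 <= D /\ forall n v, vnorm (op_pow B n (Cc (op_pow G n v))) <= D * (1/2) ^ n * vnorm v.
Proof.
  intros HB HC HQ.
  destruct (bl_bounded B HB) as [K [HK0 HK]], (bl_bounded Cc HC) as [Kc [HKc0 HKc]].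
  destruct (qn_bound_ge1 G HQ (/ (2 * (K + 1)))) as [C [HC1 HCb]].
  { apply Rinv_0_lt_compat; lra. }
  exists (1 * Kc * C). split. { apply Rmult_le_pos; [apply Rmult_le_pos|]; lra. }
  apply (sandwich_bound B G Cc 1 C Kc K (/ (2 * (K + 1)))); auto; try lra.
  - left; apply Rinv_0_lt_compat; lra.
  - rewrite Rmult_comm. apply Rmult_le_reg_l with (2 * (K + 1)). lra.
    rewrite <- Rmult_assoc, Rinv_r; lra.
  - intros n w. rewrite Rmult_1_l. apply op_pow_bounded; auto.
Qed.

Lemma qn_bound_of_factorization Z T L R KL KR :
  bounded_linear Z -> qn_bound T -> bounded_by L KL -> bounded_by R KR -> 0 <= KL -> 0 <= KR ->
  (forall n v, op_pow Z (S n) v = L (op_pow T n (R v))) -> qn_bound Z.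
Proof.
  intros HZ HT HL HR HKL HKR H.
  destruct (bl_bounded Z HZ) as [M [HM0 HM]]. apply (qn_bound_eventually Z M HM HM0).
  intros eps He. destruct (qn_bound_ge1 T HT eps ltac:(lra)) as [C [HC1 HC]].
  exists (KL * C * KR / eps), 1%nat. intros n v Hn.
  destruct n as [|n]; [lia|]. rewrite H.
  eapply Rle_trans. apply HL. assert (0 <= vnorm v) by apply vnorm_nonneg.
  assert (0 < eps ^ n) by (apply pow_lt; lra).
  apply Rle_trans with (KL * (C * eps ^ n * (KR * vnorm v))).
  - apply Rmult_le_compat_l; auto. eapply Rle_trans. apply HC.
    apply Rmult_le_compat_l. apply Rmult_le_pos; lra. apply HR.
  - right. simpl. field. lra.
Qed.

Lemma qn_bound_commuting_product Z T M : bounded_linear M -> qn_bound T ->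
  (forall v, T (M v) = M (T v)) -> (forall v, Z v = T (M v)) -> qn_bound Z.
Proof.
  intros HM HQ Hc HZ eps He.
  destruct (bl_bounded M HM) as [K [HK0 HK]].
  destruct (qn_bound_ge1 T HQ (eps / (K + 1))) as [C [HC1 HC]]. { apply Rdiv_lt_0_compat; lra. }
  exists (C * 1 * 1). intros n v.
  replace (op_pow Z n v) with (op_pow T n ((fun u => u) (op_pow M n v))).
  - apply (sandwich_bound T M (fun u => u) C 1 1 (eps / (K + 1)) K); auto; try lra.
    + left; apply Rdiv_lt_0_compat; lra.
    + replace (eps / (K + 1) * K) with (eps * (K / (K + 1))) by (field; lra).
      rewrite <- (Rmult_1_r eps) at 2. apply Rmult_le_compat_l; [lra|].
      apply Rmult_le_reg_r with (K + 1); [lra|]. unfold Rdiv. rewrite Rmult_assoc, Rinv_l; lra.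
    + intro; lra.
    + intros k w. rewrite Rmult_1_l. apply op_pow_bounded; auto.
  - rewrite <- op_pow_mul_comm by auto. induction n; simpl; auto. unfold op_mul; rewrite IHn, HZ; auto.
Qed.

Lemma op_pow_add_orth A B n v : additive B -> (forall w, B (A w) = vzero) ->
  op_pow (op_add A B) (S n) v = vadd (A (op_pow (op_add A B) n v)) (op_pow B (S n) v).
Proof.
  intros HBa HBA. rewrite op_pow_S. unfold op_add at 1. f_equal.
  induction n. reflexivity.
  rewrite op_pow_S. unfold op_add at 1. rewrite HBa, HBA, add0v, IHn. reflexivity.
Qed.

Lemma INR_le_pow2 n : INR (S n) <= 2 ^ n.
Proof.
  induction n. simpl; lra. rewrite S_INR. change (2 ^ S n) with (2 * 2 ^ n).
  assert (1 <= 2 ^ n) by (apply pow_R1_Rle; lra). lra.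
Qed.

(* The sum of quasinilpotents [A], [B] with [B A = 0] is quasinilpotent: expanding
   [(A+B)^n] leaves at most [n+1] nonzero words [A^i B^(n-i)]. *)
Lemma qn_bound_sum_orth A B : additive A -> additive B -> qn_bound A -> qn_bound B ->
  (forall v, B (A v) = vzero) -> qn_bound (op_add A B).
Proof.
  intros HAa HBa QA QB HBA eps He. set (d := eps / 2).
  destruct (qn_bound_ge1 A QA d ltac:(unfold d; lra)) as [CA [HCA1 HCA]].
  destruct (qn_bound_ge1 B QB d ltac:(unfold d; lra)) as [CB [HCB1 HCB]].
  assert (Hd : 0 < d) by (unfold d; lra).
  assert (key : forall n m v, vnorm (op_pow A m (op_pow (op_add A B) n v)) <=
                INR (S n) * (CA * CB) * d ^ (m + n) * vnorm v).
  { induction n; intros m v; assert (0 <= d ^ m) by (apply pow_le; lra);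
      assert (0 <= vnorm v) by apply vnorm_nonneg.
    - eapply Rle_trans. apply HCA. rewrite Nat.add_0_r. simpl INR.
      apply Rmult_le_compat_r; auto. apply Rmult_le_compat_r; auto. nra.
    - rewrite op_pow_add_orth, (op_pow_additive A m HAa) by auto.
      eapply Rle_trans. apply vnorm_triangle.
      rewrite <- op_pow_Sr. eapply Rle_trans. apply Rplus_le_compat. apply IHn. apply HCA.
      assert (Hb := HCB (S n) v).
      replace (S m + n)%nat with (m + S n)%nat by lia. rewrite (S_INR (S n)).
      rewrite pow_add in *. simpl pow in *.
      assert (0 <= d ^ n) by (apply pow_le; lra).
      assert (CA * d ^ m * vnorm (op_pow B (S n) v) <= CA * d ^ m * (CB * (d * d ^ n) * vnorm v)).
      { apply Rmult_le_compat_l; auto. apply Rmult_le_pos; lra. }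
      nra. }
  exists (CA * CB). intros n v.
  eapply Rle_trans. apply (key n 0%nat v).
  assert (0 <= vnorm v) by apply vnorm_nonneg.
  apply Rmult_le_compat_r; auto. rewrite (Rmult_comm (INR (S n))), Rmult_assoc.
  apply Rmult_le_compat_l. nra.
  apply Rle_trans with (2 ^ n * d ^ n). apply Rmult_le_compat_r. apply pow_le; lra. apply INR_le_pow2.
  rewrite <- Rpow_mult_distr. unfold d. right; f_equal; field.
Qed.

Lemma qn_bound_of_square Z W : bounded_linear Z -> qn_bound W ->
  (forall k v, op_pow Z (2 * k) v = op_pow W k v) -> qn_bound Z.
Proof.
  intros HZ HW H eps He.
  destruct (bl_bounded Z HZ) as [M [HM0 HM]].
  destruct (qn_bound_ge1 W HW (eps * eps) ltac:(nra)) as [C [HC1 HC]].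
  set (K := C * (1 + (M + 1) / eps)).
  assert (HK : C <= K /\ M * C <= K * eps).
  { assert (0 <= (M + 1) / eps) by (apply Rle_mult_inv_pos; lra).
    unfold K. split. nra. replace (C * (1 + (M + 1) / eps) * eps) with (C * eps + C * (M + 1))
      by (field; lra). nra. }
  exists K. intros n v.
  assert (Hv : 0 <= vnorm v) by apply vnorm_nonneg.
  assert (Heven : forall k, vnorm (op_pow Z (2 * k) v) <= C * eps ^ (2 * k) * vnorm v).
  { intro k. rewrite H, pow_mult. simpl (eps ^ 2). rewrite Rmult_1_r. apply HC. }
  destruct (Nat.Even_or_Odd n) as [[k Hk]|[k Hk]]; subst n;
    assert (0 <= eps ^ (2 * k)) by (apply pow_le; lra).
  - eapply Rle_trans. apply Heven. apply Rmult_le_compat_r; auto. apply Rmult_le_compat_r; lra.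
  - rewrite Nat.add_1_r, op_pow_S. eapply Rle_trans. apply HM.
    apply Rle_trans with (M * (C * eps ^ (2 * k) * vnorm v)). apply Rmult_le_compat_l; auto.
    change (eps ^ S (2 * k)) with (eps * eps ^ (2 * k)).
    replace (M * (C * eps ^ (2 * k) * vnorm v)) with (M * C * (eps ^ (2 * k) * vnorm v)) by ring.
    replace (K * (eps * eps ^ (2 * k)) * vnorm v) with (K * eps * (eps ^ (2 * k) * vnorm v)) by ring.
    apply Rmult_le_compat_r. apply Rmult_le_pos; auto. tauto.
Qed.
End QuasinilpotentCalculus.

Section GDrazin.
Context {X : CBanach}.
Implicit Types (v : X) (a b x : X -> X).

Definition gdrazin_inverse a x := bounded_linear x /\ (forall v, x (a (x v)) = x v) /\
  (forall v, a (x v) = x (a v)) /\ qn_bound (fun v => vsub (a v) (a (a (x v)))).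

Lemma gdrazin_inverse_of_has a : bounded_linear a -> has_gDrazin a -> exists x, gdrazin_inverse a x.
Proof.
  intros Ha [x [Hx [H1 [H2 H3]]]]. exists x. split; [|split;[|split]]; auto.
  - intro v. change (x (a (x v))) with (op_mul x (op_mul a x) v). rewrite <- H1; auto.
  - intro v. change (a (x v)) with (op_mul a x v). rewrite H2; auto.
  - apply qn_bound_of_quasinilpotent; auto. unfold op_sub, op_mul. bl_auto.
Qed.

Lemma has_gDrazin_of_inverse a x : bounded_linear a -> gdrazin_inverse a x -> has_gDrazin a.
Proof.
  intros Ha [Hx [H1 [H2 H3]]]. exists x. split; [|split;[|split]]; auto.
  - apply functional_extensionality; intro v. unfold op_mul; auto.
  - apply functional_extensionality; intro v. unfold op_mul; auto.
  - apply quasinilpotent_of_qn_bound; auto. unfold op_sub, op_mul. bl_auto.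
Qed.

Lemma gdrazin_inverse_ext a a' x : (forall v, a v = a' v) -> gdrazin_inverse a x -> gdrazin_inverse a' x.
Proof. intros H; replace a' with a; auto. apply functional_extensionality; auto. Qed.

(* [x^2] is a g-Drazin inverse of [a^2]: the residual [a^2 - a^4 x^2] factors as
   [(a - a^2 x)(a + a^2 x)], a product of commuting operators. *)
Lemma gdrazin_square a x : bounded_linear a -> gdrazin_inverse a x ->
  gdrazin_inverse (fun v => a (a v)) (fun v => x (x v)).
Proof.
  intros Ha [Hx [H1 [H2 H3]]].
  assert (aA := bl_additive a Ha). assert (xA := bl_additive x Hx).
  assert (H1' : forall v, x (x (a v)) = x v). { intro v. rewrite <- H2. apply H1. }
  split; [|split;[|split]].
  - bl_auto.
  - intro v. rewrite ?H2, ?H1'. reflexivity.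
  - intro v. rewrite ?H2. reflexivity.
  - apply (qn_bound_commuting_product _ (fun v => vsub (a v) (a (a (x v))))
             (fun v => vadd (a v) (a (a (x v))))); [bl_auto|auto|..];
      intro v; unfold vsub; push_additive; rewrite ?H2, ?H1'; abel.
Qed.

(* Cline's formula: if [w] is a g-Drazin inverse of [ab], then [b w^2 a] is one of [ba].
   With [pi = 1 - ab w], the residual is [b pi a], whose powers are
   [(b pi a)^(n+1) = b (ab pi)^n pi a]. *)
Lemma gdrazin_cline a b w : bounded_linear a -> bounded_linear b ->
  gdrazin_inverse (fun v => a (b v)) w ->
  gdrazin_inverse (fun v => b (a v)) (fun v => b (w (w (a v)))).
Proof.
  intros Ha Hb [Hw [W1 [W2 W3]]].
  assert (aA := bl_additive a Ha). assert (bA := bl_additive b Hb). assert (wA := bl_additive w Hw).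
  assert (W1' : forall v, w (w (a (b v))) = w v). { intro v. rewrite <- W2. apply W1. }
  split; [|split;[|split]].
  - bl_auto.
  - intro v. rewrite ?W2, ?W1'. reflexivity.
  - intro v. rewrite ?W2. reflexivity.
  - set (pi := fun v => vsub v (a (b (w v)))).
    assert (Hpa : bounded_linear (fun v => pi (a v))) by (unfold pi; bl_auto).
    destruct (bl_bounded b Hb) as [Kb [Kb0 HKb]], (bl_bounded _ Hpa) as [Kp [Kp0 HKp]].
    apply (qn_bound_ext (fun v => b (pi (a v)))).
    { intro v. unfold pi, vsub. push_additive. rewrite ?W2, ?W1'. reflexivity. }
    refine (qn_bound_of_factorization _ _ b (fun v => pi (a v)) Kb Kp _ W3 _ _ _ _ _); auto.
    { unfold pi; bl_auto. }
    intros n v. induction n. reflexivity.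
    assert (Hpi : forall z, pi (a (b z)) = vsub (a (b z)) (a (b (a (b (w z)))))).
    { intro z. unfold pi, vsub. rewrite ?W2. reflexivity. }
    rewrite op_pow_S, IHn, Hpi. reflexivity.
Qed.
End GDrazin.

Lemma vanish_of_geometric {X : CBanach} (y : X) (D c : R) (F : nat -> X) :
  0 <= D -> 0 <= c -> (forall n, y = F (S n)) ->
  (forall n, vnorm (F n) <= D * (1/2) ^ n * c) -> y = vzero.
Proof.
  intros HD Hc H1 H2. apply vnorm_eq0, real_small_eq0. apply vnorm_nonneg.
  intros e He. assert (Hp : 0 < D * c + 1) by nra.
  destruct (geometric_eventually_lt (1/2) (e / (D * c + 1)) ltac:(lra)) as [N HN].
  { apply Rdiv_lt_0_compat; lra. }
  specialize (HN N (le_n _)). rewrite (H1 N). eapply Rle_lt_trans. apply H2.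
  assert (0 <= (1/2) ^ N) by (apply pow_le; lra).
  replace (D * (1/2) ^ (S N) * c) with (D * c * (1/2) ^ N * (1/2)) by (simpl; ring).
  apply Rle_lt_trans with ((D * c + 1) * (1/2) ^ N). nra.
  apply Rmult_lt_reg_l with (/ (D * c + 1)). apply Rinv_0_lt_compat; lra.
  rewrite <- Rmult_assoc, Rinv_l, Rmult_1_l by lra. unfold Rdiv in HN; lra.
Qed.

(* The key point
   is that [s] commutes with the spectral idempotent [pi = 1 - s^2 w]; this
   follows from [P s pi = 0] and [pi s P = 0] for [P = 1 - pi], which hold because
   [w^n s^n] and [s^n w^n] act as [P] while [s^2 pi] is quasinilpotent. *)
Section SquareRoot.
Context {X : CBanach}.
Implicit Types (u v y z : X).
Variables (s w : X -> X).
Hypotheses (Hs : bounded_linear s) (Hw : bounded_linear w)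
  (W1 : forall v, w (s (s (w v))) = w v) (W2 : forall v, s (s (w v)) = w (s (s v)))
  (W3 : qn_bound (fun v => vsub (s (s v)) (s (s (s (s (w v))))))).

Let t v := s (s v).
Let P v := s (s (w v)).
Let pi v := vsub v (P v).

Let sA : additive s := bl_additive s Hs.
Let wA : additive w := bl_additive w Hw.

Lemma w_w_s_s v : w (w (s (s v))) = w v.
Proof. rewrite <- W2. apply W1. Qed.

Lemma pi_bounded_linear : bounded_linear pi.
Proof. unfold pi, P; bl_auto. Qed.

Lemma pi_idem u : pi (pi u) = pi u.
Proof. unfold pi, P, vsub. push_additive. rewrite ?W2, ?w_w_s_s. abel. Qed.

Lemma P_idem u : P (P u) = P u.
Proof. unfold P. rewrite ?W2, ?w_w_s_s. reflexivity. Qed.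

Lemma t_pi_comm u : t (pi u) = pi (t u).
Proof. unfold t, pi, P, vsub. push_additive. rewrite ?W2. reflexivity. Qed.

Lemma pi_plus_P u : vadd (pi u) (P u) = u.
Proof. unfold pi, vsub. abel. Qed.

Let Q v := t (pi v).

Lemma Q_qn : qn_bound Q.
Proof. refine (qn_bound_ext _ Q _ W3). intro v. unfold Q, t, pi, P, vsub. push_additive. reflexivity. Qed.

Lemma Q_pow_pi n y : op_pow Q n (pi y) = op_pow t n (pi y).
Proof.
  induction n. reflexivity. rewrite !op_pow_S, IHn. unfold Q.
  rewrite <- (op_pow_comm t pi n) by (intro; apply t_pi_comm). rewrite pi_idem. reflexivity.
Qed.

Lemma w_pow_t_pow n z : op_pow w (S n) (op_pow t (S n) z) = P z.
Proof.
  assert (HPt : forall u, P (t u) = t (P u)) by (intro; unfold P, t; rewrite ?W2; reflexivity).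
  assert (Hwt : forall u, w (t u) = P u) by (intro; unfold P, t; rewrite ?W2; reflexivity).
  rewrite op_pow_Sr, op_pow_S, Hwt, <- (op_pow_comm t P n) by (intro; symmetry; apply HPt).
  revert z; induction n; intro z. reflexivity.
  rewrite op_pow_Sr, op_pow_S, Hwt, <- (op_pow_comm t P n) by (intro; symmetry; apply HPt).
  rewrite P_idem. apply IHn.
Qed.

Lemma t_pow_w_pow n z : op_pow t (S n) (op_pow w (S n) z) = P z.
Proof.
  assert (HPw : forall u, P (w u) = w (P u)) by (intro; unfold P; rewrite ?W2, ?w_w_s_s; reflexivity).
  assert (Htw : forall u, t (w u) = P u) by reflexivity.
  rewrite op_pow_Sr, op_pow_S, Htw, <- (op_pow_comm w P n) by (intro; symmetry; apply HPw).
  revert z; induction n; intro z. reflexivity.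
  rewrite op_pow_Sr, op_pow_S, Htw, <- (op_pow_comm w P n) by (intro; symmetry; apply HPw).
  rewrite P_idem. apply IHn.
Qed.

Lemma P_s_pi v : P (s (pi v)) = vzero.
Proof.
  destruct (decay_qn_right w Q s Hw Hs Q_qn) as [D [HD HB]].
  apply (vanish_of_geometric _ D (vnorm (pi v)) (fun n => op_pow w n (s (op_pow Q n (pi v))))); auto.
  - apply vnorm_nonneg.
  - intro n. rewrite <- (w_pow_t_pow n), Q_pow_pi. f_equal. apply op_pow_comm; auto.
Qed.

Lemma pi_s_P v : pi (s (P v)) = vzero.
Proof.
  assert (Hps : bounded_linear (fun u => pi (s u))) by (apply bl_comp; [apply pi_bounded_linear | exact Hs]).
  destruct (decay_qn_left Q w (fun u => pi (s u)) Hw Hps Q_qn) as [D [HD HB]].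
  apply (vanish_of_geometric _ D (vnorm v) (fun n => op_pow Q n (pi (s (op_pow w n v))))); auto.
  - apply vnorm_nonneg.
  - intro n. rewrite <- (t_pow_w_pow n), Q_pow_pi, (op_pow_comm t pi) by (intro; apply t_pi_comm).
    f_equal. rewrite <- (op_pow_comm t s); auto.
Qed.

Lemma s_pi_comm v : s (pi v) = pi (s v).
Proof.
  assert (pA : additive pi) by apply (bl_additive pi pi_bounded_linear).
  transitivity (pi (s (pi v))).
  - rewrite <- (pi_plus_P (s (pi v))) at 1. rewrite P_s_pi. apply vadd_0.
  - rewrite <- (pi_plus_P v) at 2. rewrite sA, pA, pi_s_P. symmetry; apply vadd_0.
Qed.

Lemma s_w_comm v : s (w v) = w (s v).
Proof.
  assert (Hpw : pi (w v) = vzero) by (unfold pi, P, vsub; rewrite ?W2, ?w_w_s_s; apply vadd_opp).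
  assert (Hsw : s (w v) = P (s (w v))).
  { rewrite <- (pi_plus_P (s (w v))) at 1.
    rewrite <- s_pi_comm, Hpw, (additive_0 s sA). apply add0v. }
  assert (HPs : P (s v) = s (P v)).
  { assert (HP : forall u, P u = vsub u (pi u)) by (intro; unfold pi, vsub; abel).
    rewrite !HP, (additive_sub s v (pi v) sA), s_pi_comm. reflexivity. }
  assert (HwP : forall y, w (P y) = w y) by (intro; unfold P; rewrite ?W2, ?w_w_s_s; reflexivity).
  rewrite Hsw, <- (HwP (s v)), HPs. unfold P. rewrite ?W2, ?w_w_s_s. reflexivity.
Qed.

(* The residual [s - s^2 (s w)] is [s pi], whose square [s^2 pi] is [Q]. *)
Lemma gdrazin_sqrt_aux : gdrazin_inverse s (fun v => s (w v)).
Proof.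
  split; [|split;[|split]].
  - bl_auto.
  - intro v. rewrite W1. reflexivity.
  - intro v. rewrite s_w_comm. reflexivity.
  - apply (qn_bound_ext (fun v => s (pi v))).
    { intro v. unfold pi, P, vsub. push_additive. reflexivity. }
    apply (qn_bound_of_square _ Q). { apply bl_comp; [exact Hs | apply pi_bounded_linear]. } { apply Q_qn. }
    induction k; intro v. reflexivity.
    replace (2 * S k)%nat with (S (S (2 * k))) by lia. rewrite !op_pow_S, IHk.
    unfold Q, t. rewrite <- s_pi_comm, pi_idem. reflexivity.
Qed.
End SquareRoot.

Lemma gdrazin_sqrt {X : CBanach} (s w : X -> X) : bounded_linear s ->
  gdrazin_inverse (fun v => s (s v)) w -> gdrazin_inverse s (fun v => s (w v)).
Proof. intros Hs [Hw [W1 [W2 W3]]]. apply gdrazin_sqrt_aux; auto. Qed.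

(* The sum theorem: if [p], [q] have g-Drazin inverses [x], [y] and [p q = 0], then
   [p + q] has the g-Drazin inverse [U + V], where [U] and [V] solve
     U = (1 - y q) x + q (1 - y q) U x,      V = y (1 - x p) + y V p (1 - x p);
   these are the series [sum_n (q pi_q)^n (1 - yq) x^(n+1)] and
   [sum_n y^(n+1) (1 - xp) (p pi_p)^n] with [pi_p = 1 - xp], [pi_q = 1 - yq]. *)
Section OrthogonalSum.
Context {X : CBanach}.
Implicit Types (u v : X).
Variables (p q x y : X -> X).
Hypotheses (Hp : bounded_linear p) (Hq : bounded_linear q)
  (Hx : bounded_linear x) (Hy : bounded_linear y)
  (X1 : forall v, x (p (x v)) = x v) (X2 : forall v, p (x v) = x (p v))
  (X3 : qn_bound (fun v => vsub (p v) (p (p (x v)))))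
  (Y1 : forall v, y (q (y v)) = y v) (Y2 : forall v, q (y v) = y (q v))
  (Y3 : qn_bound (fun v => vsub (q v) (q (q (y v)))))
  (Hpq : forall v, p (q v) = vzero).

Let pA : additive p := bl_additive p Hp.
Let qA : additive q := bl_additive q Hq.
Let xA : additive x := bl_additive x Hx.
Let yA : additive y := bl_additive y Hy.

Lemma x_x_p v : x (x (p v)) = x v.
Proof. rewrite <- X2. apply X1. Qed.

Lemma y_y_q v : y (y (q v)) = y v.
Proof. rewrite <- Y2. apply Y1. Qed.

Lemma x_q v : x (q v) = vzero.
Proof. rewrite <- (x_x_p (q v)), Hpq. push_additive. reflexivity. Qed.

Lemma p_y v : p (y v) = vzero.
Proof. assert (H : y v = q (y (y v))) by (rewrite Y2, Y1; reflexivity). rewrite H, Hpq. reflexivity. Qed.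

Lemma x_y v : x (y v) = vzero.
Proof. rewrite <- (x_x_p (y v)), p_y. push_additive. reflexivity. Qed.

Ltac gd_simpl R := repeat progress (unfold vsub in *; push_additive; R).
Ltac base_rw := rewrite ?X2, ?Y2, ?x_x_p, ?y_y_q, ?Hpq, ?x_q, ?p_y, ?x_y.

Definition p_res v := p (vsub v (x (p v))).
Definition q_res v := q (vsub v (y (q v))).

Lemma p_res_qn : qn_bound p_res.
Proof.
  refine (qn_bound_ext _ _ _ X3). intro v. unfold p_res, vsub. push_additive. rewrite X2. reflexivity.
Qed.

Lemma q_res_qn : qn_bound q_res.
Proof.
  refine (qn_bound_ext _ _ _ Y3). intro v. unfold q_res, vsub. push_additive. rewrite Y2. reflexivity.
Qed.

Section Candidate.
Variables (U V : X -> X).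
Hypotheses (HU : bounded_linear U) (HV : bounded_linear V)
  (U_eq : forall v, U v = vadd (vsub (x v) (y (q (x v)))) (q_res (U (x v))))
  (V_eq : forall v, V v = vadd (y (vsub v (x (p v)))) (y (V (p_res v)))).

Let UA : additive U := bl_additive U HU.
Let VA : additive V := bl_additive V HV.

Ltac unfold_U v R := rewrite (U_eq v); unfold q_res; gd_simpl R.
Ltac unfold_V v R := rewrite (V_eq v); unfold p_res; gd_simpl R.

Lemma U_xp v : U (x (p v)) = U v.
Proof. unfold_U (x (p v)) ltac:(base_rw). unfold_U v ltac:(base_rw). reflexivity. Qed.

Lemma yq_U v : y (q (U v)) = vzero.
Proof. unfold_U v ltac:(base_rw). abel. Qed.

Lemma yqq_U v : y (q (q (U v))) = vzero.
Proof. rewrite <- (Y2 (q (U v))), yq_U. push_additive. reflexivity. Qed.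

Lemma yqqq_U v : y (q (q (q (U v)))) = vzero.
Proof. rewrite <- (Y2 (q (q (U v)))), yqq_U. push_additive. reflexivity. Qed.


Lemma p_U v : p (U v) = x (p v).
Proof. unfold_U v ltac:(base_rw). abel. Qed.

Lemma U_p v : U (p v) = vadd (vsub (x (p v)) (y (q (x (p v))))) (q (U v)).
Proof. unfold_U (p v) ltac:(base_rw; rewrite ?U_xp, ?yq_U, ?yqq_U). abel. Qed.

Lemma y_U v : y (U v) = vzero.
Proof. rewrite <- (y_y_q (U v)), yq_U. push_additive. reflexivity. Qed.

Lemma U_y v : U (y v) = vzero.
Proof. unfold_U (y v) ltac:(base_rw). abel. Qed.

Lemma U_q v : U (q v) = vzero.
Proof. unfold_U (q v) ltac:(base_rw). abel. Qed.


Lemma V_x v : V (x v) = vzero.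
Proof.
  assert (H : V (vsub (x v) (x (p (x v)))) = V (x v)).
  { rewrite (V_eq (vsub _ _)), (V_eq (x v)). unfold p_res. gd_simpl ltac:(base_rw). abel. }
  rewrite <- H. gd_simpl ltac:(base_rw). abel.
Qed.


Lemma V_q v : V (q v) = y (q v).
Proof. unfold_V (q v) ltac:(base_rw; rewrite ?V_x). abel. Qed.

Lemma yq_V v : y (q (V v)) = V v.
Proof. unfold_V v ltac:(base_rw). abel. Qed.

Lemma x_V v : x (V v) = vzero.
Proof. unfold_V v ltac:(base_rw). abel. Qed.

Lemma p_V v : p (V v) = vzero.
Proof. unfold_V v ltac:(base_rw). abel. Qed.


Lemma q_V v : q (V v) = vadd (y (q (vsub v (x (p v))))) (V (p (vsub v (x (p v))))).
Proof. rewrite (V_eq v). push_additive. rewrite ?Y2, ?yq_V. reflexivity. Qed.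

Lemma U_V v : U (V v) = vzero.
Proof. unfold_V v ltac:(base_rw; rewrite ?U_y). abel. Qed.

Lemma V_y v : V (y v) = y (y v).
Proof. unfold_V (y v) ltac:(base_rw; rewrite ?V_x). abel. Qed.

Lemma V_V v : V (V v) = y (V v).
Proof. unfold_V (V v) ltac:(base_rw; rewrite ?V_x, ?p_V). abel. Qed.

Ltac full_rw := base_rw; rewrite ?U_xp, ?yq_U, ?yqq_U, ?yqqq_U, ?p_U, ?U_p, ?y_U, ?U_y, ?U_q,
  ?U_V, ?V_q, ?yq_V, ?x_V, ?V_x, ?p_V, ?q_V, ?V_y, ?V_V.
Ltac gd_norm := gd_simpl ltac:(full_rw).

Let sum_op v := vadd (p v) (q v).
Let cand v := vadd (U v) (V v).
Let proj v := vsub v (sum_op (cand v)).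

Lemma cand_commutes v : sum_op (cand v) = cand (sum_op v).
Proof. unfold sum_op, cand. gd_norm. abel. Qed.

Lemma cand_outer v : cand (sum_op (cand v)) = cand v.
Proof. unfold sum_op, cand. gd_norm. unfold_V v ltac:(full_rw). abel. Qed.

Lemma proj_q_res u : proj (q_res u) = q_res u.
Proof. unfold proj, sum_op, cand, q_res. gd_norm. abel. Qed.

Lemma p_res_proj u : p_res (proj u) = p_res u.
Proof. unfold proj, sum_op, cand, p_res. gd_norm. abel. Qed.

Lemma residual_split v :
  vsub (sum_op v) (sum_op (sum_op (cand v))) = vadd (q_res (proj v)) (proj (p_res v)).
Proof. unfold proj, sum_op, cand, q_res, p_res. gd_norm. abel. Qed.

Lemma residual_orth v : proj (p_res (q_res (proj v))) = vzero.
Proof. unfold proj, sum_op, cand, q_res, p_res. gd_norm. abel. Qed.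

Lemma orth_sum_candidate : gdrazin_inverse sum_op cand.
Proof.
  assert (Hproj : bounded_linear proj) by (unfold proj, sum_op, cand; bl_auto).
  assert (Hqr : bounded_linear q_res) by (unfold q_res; bl_auto).
  assert (Hpr : bounded_linear p_res) by (unfold p_res; bl_auto).
  destruct (bl_bounded q_res Hqr) as [K1 [K10 HK1]], (bl_bounded proj Hproj) as [K2 [K20 HK2]],
    (bl_bounded p_res Hpr) as [K3 [K30 HK3]].
  split; [|split;[|split]].
  - unfold cand; bl_auto.
  - exact cand_outer.
  - exact cand_commutes.
  - apply (qn_bound_ext (op_add (fun v => q_res (proj v)) (fun v => proj (p_res v)))).
    { intro v. symmetry. apply residual_split. }
    apply qn_bound_sum_orth.
    + apply bl_additive; bl_auto.
    + apply bl_additive; bl_auto.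
    + apply (qn_bound_of_factorization _ q_res q_res proj K1 K2); auto. bl_auto. apply q_res_qn.
      intros n v. induction n. reflexivity. rewrite op_pow_S, IHn, proj_q_res. reflexivity.
    + apply (qn_bound_of_factorization _ p_res proj p_res K2 K3); auto. bl_auto. apply p_res_qn.
      intros n v. induction n. reflexivity. rewrite op_pow_S, IHn, p_res_proj. reflexivity.
    + exact residual_orth.
Qed.
End Candidate.

Lemma orth_sum_has_inverse : exists z, gdrazin_inverse (fun v => vadd (p v) (q v)) z.
Proof.
  assert (Hpr : bounded_linear p_res) by (unfold p_res; bl_auto).
  assert (Hqr : bounded_linear q_res) by (unfold q_res; bl_auto).
  assert (HCU : bounded_linear (fun v => vsub (x v) (y (q (x v))))) by bl_auto.
  assert (HCV : bounded_linear (fun v => y (vsub v (x (p v))))) by bl_auto.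
  destruct (decay_qn_left q_res x _ Hx HCU q_res_qn) as [DU [HDU decU]].
  destruct (series_solution _ _ _ DU (1/2) Hqr Hx HCU HDU ltac:(lra) decU) as [U [HU U_eq]].
  destruct (decay_qn_right y p_res _ Hy HCV p_res_qn) as [DV [HDV decV]].
  destruct (series_solution _ _ _ DV (1/2) Hy Hpr HCV HDV ltac:(lra) decV) as [V [HV V_eq]].
  exists (fun v => vadd (U v) (V v)). apply (orth_sum_candidate U V); auto.
Qed.
End OrthogonalSum.

Lemma gdrazin_orth_sum {X : CBanach} (r p q : X -> X) : bounded_linear p -> bounded_linear q ->
  (exists x, gdrazin_inverse p x) -> (exists y, gdrazin_inverse q y) ->
  (forall v, p (q v) = vzero) -> (forall v, r v = vadd (p v) (q v)) ->
  exists z, gdrazin_inverse r z.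
Proof.
  intros Hp Hq [x [Hx [X1 [X2 X3]]]] [y [Hy [Y1 [Y2 Y3]]]] Hpq Hr.
  destruct (orth_sum_has_inverse p q x y) as [z Hz]; auto.
  exists z. apply (gdrazin_inverse_ext (fun v => vadd (p v) (q v)) r z); auto.
Qed.

Lemma gdrazin_cline_exists {X : CBanach} (a b : X -> X) : bounded_linear a -> bounded_linear b ->
  (exists w, gdrazin_inverse (fun v => a (b v)) w) -> exists z, gdrazin_inverse (fun v => b (a v)) z.
Proof. intros Ha Hb [w Hw]. eexists. apply gdrazin_cline; eauto. Qed.

(* With [c = a + b]: [a c = a^2 + ab] and [b c = ba + b^2] are orthogonal sums, hence
   so are [c a] and [c b] by Cline's formula, hence [c^2 = ca + cb] is one as well since
   [(ca)(cb) = c (a^2 b + a b^2) = 0]; finally [c] inherits a g-Drazin inverse from [c^2]. *)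
Theorem corollary2p3 (X : CBanach) (a b : X -> X) :
  bounded_linear a -> bounded_linear b ->
  has_gDrazin a -> has_gDrazin b -> has_gDrazin (op_mul a b) ->
  op_mul a (op_mul a b) = op_zero X ->
  op_mul a (op_mul b b) = op_zero X ->
  has_gDrazin (op_add a b).
Proof.
  intros Ha Hb Da Db Dab Haab Habb.
  assert (aab : forall v, a (a (b v)) = vzero) by exact (fun v => f_equal (fun F => F v) Haab).
  assert (abb : forall v, a (b (b v)) = vzero) by exact (fun v => f_equal (fun F => F v) Habb).
  assert (aA := bl_additive a Ha). assert (bA := bl_additive b Hb).
  set (c := op_add a b). assert (Hc : bounded_linear c) by (unfold c, op_add; bl_auto).
  destruct (gdrazin_inverse_of_has a Ha Da) as [xa Ga].
  destruct (gdrazin_inverse_of_has b Hb Db) as [xb Gb].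
  destruct (gdrazin_inverse_of_has (fun v => a (b v)) ltac:(bl_auto) Dab) as [w Gab].
  assert (Gac : exists z, gdrazin_inverse (fun v => a (c v)) z).
  { apply (gdrazin_orth_sum _ (fun v => a (a v)) (fun v => a (b v))); try bl_auto; eauto.
    - eexists. apply gdrazin_square; eauto.
    - intro v; cbv beta. rewrite aab. apply (additive_0 a aA). }
  assert (Gbc : exists z, gdrazin_inverse (fun v => b (c v)) z).
  { apply (gdrazin_orth_sum _ (fun v => b (a v)) (fun v => b (b v))); try bl_auto; eauto.
    - eexists. apply gdrazin_cline; eauto.
    - eexists. apply gdrazin_square; eauto.
    - intro v; cbv beta. rewrite abb. apply (additive_0 b bA). }
  destruct (gdrazin_orth_sum (fun v => c (c v)) (fun v => c (a v)) (fun v => c (b v)))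
    as [z Gcc]; try bl_auto; try (apply gdrazin_cline_exists; auto).
  - intro v. unfold c, op_add. push_additive. rewrite aab, abb. push_additive. abel.
  - intro v. unfold c, op_add. push_additive. abel.
  - exact (has_gDrazin_of_inverse c _ Hc (gdrazin_sqrt c z Hc Gcc)).
Qed.
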